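(* Let $H\le\mathrm{GL}_n(q)$ and suppose that with respect to a basis $\{v_1,\dots,v_n\}$ of $V=\mathbb{F}_q^n$, every $g\in H$ has the block upper-triangular form $$\begin{pmatrix} g_k & g_{k,k-1} & \cdots & g_{k,1}\\ 0 & g_{k-1} & \cdots & g_{k-1,1}\\ \vdots & & \ddots & \vdots\\ 0 & 0 & \cdots & g_1\end{pmatrix},$$ where each $g\mapsto g_i\in\mathrm{GL}_{n_i}(q)$ is an irreducible representation of $H$ and $n_1+\dots+n_k=n$, and suppose $n_1<n$, so that $H$ stabilises $U=\langle v_{n-n_1+1},\dots,v_n\rangle$. Then there exists $z\in\mathrm{SL}_n(q)$ such that $D(\mathrm{GL}_n(q))\cap H^z\le Z(\mathrm{GL}_n(q))$.
   Context: Matrices act on row vectors from the right. $D(\mathrm{GL}_n(q))$ denotes the diagonal matrices with respect to $\{v_1,\dots,v_n\}$, $Z(\mathrm{GL}_n(q))$ the scalar matrices, and $H^z=z^{-1}Hz$. *)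

From HB Require Import structures.
From mathcomp Require Import all_boot all_order all_algebra all_fingroup all_field.
Set Implicit Arguments. Unset Strict Implicit. Unset Printing Implicit Defensive.
Import GRing.Theory.
Local Open Scope ring_scope.

Definition mxnat (F : fieldType) n (g : 'M[F]_n) (i j : nat) : F :=
  match @insub nat (fun k => k < n)%N _ i, @insub nat (fun k => k < n)%N _ j with
  | Some i', Some j' => g i' j'
  | _, _ => 0
  end.

(* Blocks are listed top-to-bottom by their sizes ns = [:: n_k; ...; n_1].
   block_off ns b = first (0-based) row/column index of block b. *)
Definition block_off (ns : seq nat) (b : nat) : nat := sumn (take b ns).

Definition block_upper (F : fieldType) n (ns : seq nat) (g : 'M[F]_n) : Prop :=
  forall (b : nat) (i j : 'I_n),
    (b <= size ns)%N -> (j < block_off ns b <= i)%N -> g i j = 0.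

Definition diag_block (F : fieldType) n (ns : seq nat) (g : 'M[F]_n) (b : nat)
  : 'M[F]_(nth 0%N ns b) :=
  \matrix_(i, j) mxnat g (block_off ns b + i) (block_off ns b + j).

Definition mx_irreducible_set (F : fieldType) m (S : {pred 'M[F]_m}) : Prop :=
  (0 < m)%N /\
  forall U : 'M[F]_m, (forall A, A \in S -> (U *m A <= U)%MS) ->
    U = 0 \/ row_full U.

Definition is_matrix_group (F : finFieldType) n (H : {set 'M[F]_n}) : Prop :=
  1%:M \in H /\ (forall g h, g \in H -> h \in H -> g *m h \in H) /\
  (forall g, g \in H -> g \in unitmx).

From HB Require Import structures.
From mathcomp Require Import all_boot all_order all_algebra all_fingroup all_field.
From mathcomp Require Import zify.
Import GRing.Theory.
Local Open Scope ring_scope.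

(* Since H stabilises U = <v_(m+1), ..., v_n> with m = n - n_1, every h in H
   has zero lower-left block (rows >= m, columns < m).  Let N be the matrix
   with ones exactly in that block and z = 1 - N; as N^2 = 0, z is unipotent
   with inverse 1 + N.  If z^-1 h z = diag(d), then for i >= m > j the (i, j)
   entry of h = z diag(d) z^-1 is d_i - d_j, which must vanish; both blocks
   being non-empty, d is constant. *)

Section LowerLeftShear.
Variables (F : fieldType) (n m : nat).

Definition lowleft_ones_mx : 'M[F]_n :=
  \matrix_(i, j) ((m <= i)%N && (j < m)%N)%:R.
Local Notation N := lowleft_ones_mx.

Definition shear_mx : 'M[F]_n := 1%:M - N.

Lemma lowleft_diag_lowleft (d : 'rV[F]_n) : N *m diag_mx d *m N = 0.
Proof.
rewrite -mulmxA mul_diag_mx.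
apply/matrixP => i j; rewrite !mxE; apply: big1 => k _; rewrite !mxE.
by case: (ltnP k m) => hk; rewrite ?(leqNgt m k) ?hk /= ?andbF ?mulr0 ?mul0r.
Qed.

Lemma lowleft_sqr : N *m N = 0.
Proof. by have := lowleft_diag_lowleft (const_mx 1); rewrite diag_const_mx mulmx1. Qed.

Lemma shear_mxK : (1%:M + N) *m shear_mx = 1%:M.
Proof. by rewrite mulmxDl mul1mx mulmxBr mulmx1 lowleft_sqr subr0 subrK. Qed.

Lemma shear_mxKV : shear_mx *m (1%:M + N) = 1%:M.
Proof. by rewrite mulmxBl mul1mx mulmxDr mulmx1 lowleft_sqr addr0 addrK. Qed.

Lemma shear_mx_unit : shear_mx \in unitmx.
Proof. by case: (mulmx1_unit shear_mxK). Qed.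

Lemma invmx_shear : invmx shear_mx = 1%:M + N.
Proof.
move/(congr1 (mulmx^~ (invmx shear_mx))): shear_mxK.
by rewrite (mulmxK shear_mx_unit) mul1mx.
Qed.

Lemma det_shear : \det shear_mx = 1.
Proof.
have shear_trig : is_trig_mx shear_mx.
  apply/is_trig_mxP => i j lt_ij; rewrite !mxE -val_eqE /= ltn_eqF //.
  by case: (ltnP j m) => hj; rewrite ?andbF ?(leqNgt m i) ?(ltn_trans lt_ij hj) subrr.
rewrite det_trig //; apply: big1 => i _; rewrite !mxE eqxx /=.
by case: (ltnP i m) => hi; rewrite ?andbF ?andbT ?ltnNge ?hi ?subr0.
Qed.

Lemma shear_conj_diag_lowleft (d : 'rV[F]_n) (i j : 'I_n) :
  (m <= i)%N -> (j < m)%N ->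
  (shear_mx *m diag_mx d *m invmx shear_mx) i j = d 0 i - d 0 j.
Proof.
move=> hi hj; rewrite invmx_shear mulmxDr mulmx1 !mulmxBl mul1mx.
rewrite lowleft_diag_lowleft subr0 mul_mx_diag mul_diag_mx !mxE hi hj /=.
have -> : (i == j) = false by apply/negbTE/eqP => eq_ij; move: hj; rewrite -eq_ij ltnNge hi.
by rewrite mulr0n mulr1 mul1r sub0r addrC.
Qed.

Lemma shear_conj_diag_scalar (h : 'M[F]_n) :
  (0 < m)%N -> (m < n)%N ->
  (forall i j : 'I_n, (m <= i)%N -> (j < m)%N -> h i j = 0) ->
  is_diag_mx (invmx shear_mx *m h *m shear_mx) ->
  is_scalar_mx (invmx shear_mx *m h *m shear_mx).
Proof.
move=> m_gt0 lt_mn h_lowleft /diag_mxP[d Dd].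
have hE : h = shear_mx *m diag_mx d *m invmx shear_mx.
  by rewrite -Dd !mulmxA (mulmxV shear_mx_unit) mul1mx (mulmxK shear_mx_unit).
have d_cut (i j : 'I_n) : (m <= i)%N -> (j < m)%N -> d 0 i = d 0 j.
  move=> hi hj; apply/eqP; rewrite -subr_eq0 -shear_conj_diag_lowleft //.
  by rewrite -hE h_lowleft.
pose i0 : 'I_n := Ordinal lt_mn.
pose j0 : 'I_n := Ordinal (ltn_trans m_gt0 lt_mn).
have d_const (i : 'I_n) : d 0 i = d 0 i0.
  case: (ltnP i m) => hi; first by rewrite (d_cut i0 i).
  by rewrite (d_cut i j0) // (d_cut i0 j0).
apply/is_scalar_mxP; exists (d 0 i0); rewrite Dd.
by apply/matrixP => i j; rewrite !mxE d_const.
Qed.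

End LowerLeftShear.

Lemma block_upper_rcons_lowleft (F : fieldType) n (s : seq nat) (x : nat)
    (g : 'M[F]_n) :
  block_upper (rcons s x) g ->
  forall i j : 'I_n, (sumn s <= i)%N -> (j < sumn s)%N -> g i j = 0.
Proof.
move=> g_up i j hi hj; apply: (g_up (size s)); first by rewrite size_rcons.
by rewrite /block_off -cats1 take_size_cat // hj hi.
Qed.

Theorem mainTheorem11 (F : finFieldType) (n : nat) (H : {set 'M[F]_n})
  (ns : seq nat) :
  is_matrix_group H ->
  all (fun m => 0 < m)%N ns ->
  sumn ns = n ->
  (forall g, g \in H -> block_upper ns g) ->
  (forall b, (b < size ns)%N ->
     mx_irreducible_set [pred A | [exists g in H, A == diag_block ns g b]]) ->
  (last 0%N ns < n)%N ->
  exists z : 'M[F]_n,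
    \det z = 1 /\
    forall h, h \in H ->
      is_diag_mx (invmx z *m h *m z) -> is_scalar_mx (invmx z *m h *m z).
Proof.
move=> _ ns_pos ns_sum H_up _ ns_last.
case/lastP: ns ns_pos ns_sum H_up ns_last => [|s x] ns_pos ns_sum H_up ns_last.
  by rewrite /= -ns_sum in ns_last.
rewrite last_rcons in ns_last; rewrite sumn_rcons in ns_sum.
have x_gt0 : (0 < x)%N by move/allP: ns_pos; apply; rewrite mem_rcons mem_head.
have m_gt0 : (0 < sumn s)%N by lia.
have lt_mn : (sumn s < n)%N by lia.
exists (shear_mx F n (sumn s)); split; first exact: det_shear.
move=> h /H_up /block_upper_rcons_lowleft; exact: shear_conj_diag_scalar.
Qed.
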